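(* Let $G$ be a finite group with $G=\langle x,y\rangle$, where $x$ has order $3$ and $y$ has order at least $4$. Then $\mathrm{Cay}(G,\{x,y\})$ is an oriented regular representation (ORR) of $G$, unless $y$ has order $6$, $x=y^4$, and $G\cong\mathbb{Z}_6$.
   Context: For a group $G$ and $S\subseteq G$, the Cayley digraph $\mathrm{Cay}(G,S)$ has vertex set $G$, and $(u,v)$ is an arc whenever $vu^{-1}\in S$. Its automorphism group consists of the permutations of $G$ preserving the arc set, and always contains the right regular representation of $G$. $\mathrm{Cay}(G,S)$ is an oriented regular representation (ORR) if its automorphism group equals the right regular representation of $G$ and it is a proper digraph, i.e. $(u,v)$ being an arc implies $(v,u)$ is not an arc (equivalently $S\cap S^{-1}=\emptyset$). *)

From mathcomp Require Import all_boot all_fingroup all_algebra.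
Set Implicit Arguments. Unset Strict Implicit. Unset Printing Implicit Defensive.
Local Open Scope group_scope.

Definition cay_arc (gT : finGroupType) (S : {set gT}) (u v : gT) : bool :=
  v * u^-1 \in S.

Definition cay_aut (gT : finGroupType) (S : {set gT}) (f : {perm gT}) : Prop :=
  forall u v : gT, cay_arc S (f u) (f v) = cay_arc S u v.

Definition right_regular (gT : finGroupType) (f : {perm gT}) : Prop :=
  exists g : gT, forall u : gT, f u = u * g.

Definition proper_digraph (gT : finGroupType) (S : {set gT}) : Prop :=
  forall u v : gT, cay_arc S u v -> ~~ cay_arc S v u.

Definition is_ORR (gT : finGroupType) (S : {set gT}) : Prop :=
  proper_digraph S /\ (forall f : {perm gT}, cay_aut S f <-> right_regular f).

From mathcomp Require Import all_boot all_fingroup all_algebra all_solvable.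
Set Implicit Arguments. Unset Strict Implicit. Unset Printing Implicit Defensive.
Local Open Scope group_scope.

(* Arcs of Cay(G,S) are u -> s u, so right translations are automorphisms,
   and it suffices to show that an automorphism h fixing 1 is the identity.
   Such an h permutes the out-neighbourhood S = {x, y} of 1; if it swapped x
   and y, the directed 2-path x -> x^2 -> x^3 = 1 would be sent to a 2-path
   y -> w -> 1, forcing w in {xy, y^2} and w^-1 in {x, y}, which is
   impossible unless x y^2 = 1 (the exceptional case, where G = <y> is cyclic
   of order 6).  So h fixes x and y; translating, the set of points fixed by h
   is closed under left multiplication by x and y, hence it is all of G. *)

Lemma expg_neq1 (gT : finGroupType) (a : gT) n :
  (0 < n < #[a])%N -> a ^+ n != 1.
Proof.
case/andP=> n_gt0 n_lt; apply: contraTneq n_lt => an1.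
by rewrite -leqNgt dvdn_leq // order_dvdn an1.
Qed.

Lemma invg_neq (gT : finGroupType) (a : gT) : (2 < #[a])%N -> a^-1 != a.
Proof.
move=> oa; rewrite eq_invg_mul -expg2.
by apply: expg_neq1; rewrite oa.
Qed.

Lemma gen_sub_left_closed (gT : finGroupType) (A H : {set gT}) :
  1 \in H -> {in A & H, forall a u, a * u \in H} -> <<A>> \subset H.
Proof.
move=> H1 AH_H.
pose K := [set g | g *: H \subset H].
have K_group : group_set K.
  apply/andP; split; first by rewrite inE lcoset1.
  apply/subsetP => _ /mulsgP[g k gK kK ->]; rewrite !inE in gK kK *.
  by rewrite lcosetM (subset_trans _ gK) ?lcosetS.
have sAK : <<A>> \subset Group K_group.
  rewrite gen_subG; apply/subsetP => a Aa; rewrite inE.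
  by apply/subsetP => _ /lcosetP[u Hu ->]; apply: AH_H.
apply/subsetP => g /(subsetP sAK).
rewrite inE => /subsetP; rewrite -{2}[g]mulg1; apply.
by apply/lcosetP; exists 1.
Qed.

Section CayleyDigraph.
Variables (gT : finGroupType) (S : {set gT}).

Lemma cay_arcMr g u v : cay_arc S (u * g) (v * g) = cay_arc S u v.
Proof. by rewrite /cay_arc invMg mulgA mulgK. Qed.

Lemma cay_arc1l v : cay_arc S 1 v = (v \in S).
Proof. by rewrite /cay_arc invg1 mulg1. Qed.

Lemma cay_arc1r u : cay_arc S u 1 = (u^-1 \in S).
Proof. by rewrite /cay_arc mul1g. Qed.

Lemma proper_digraph_inv : {in S, forall s, s^-1 \notin S} -> proper_digraph S.
Proof.
move=> S_inv u v; rewrite /cay_arc -[u * v^-1]invgK invMg invgK.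
exact: S_inv.
Qed.

Definition arc_preserving (h : gT -> gT) :=
  forall u v, cay_arc S (h u) (h v) = cay_arc S u v.

Lemma arc_preserving_translate h u g :
  arc_preserving h -> arc_preserving (fun v => h (v * u) * g).
Proof. by move=> hS a b /=; rewrite cay_arcMr hS cay_arcMr. Qed.

Lemma arc_preserving_mem h :
  arc_preserving h -> h 1 = 1 -> forall s, (h s \in S) = (s \in S).
Proof. by move=> hS h1 s; rewrite -!cay_arc1l -{1}h1 hS. Qed.

Hypothesis genS : <<S>> = [set: gT].
Hypothesis stab1_fixS : forall h, injective h -> arc_preserving h -> h 1 = 1 ->
  {in S, forall s, h s = s}.

Lemma arc_preserving_fix1_id h :
  injective h -> arc_preserving h -> h 1 = 1 -> forall u, h u = u.
Proof.
move=> h_inj hS h1 u.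
have : u \in [set u | h u == u].
  apply: subsetP u (in_setT u); rewrite -genS.
  apply: gen_sub_left_closed; first by rewrite inE h1.
  move=> s v Ss; rewrite !inE => /eqP hv; apply/eqP.
  pose hv' w := h (w * v) * v^-1.
  have hv'_inj : injective hv' by move=> a b /mulIg /h_inj /mulIg.
  have hv'1 : hv' 1 = 1 by rewrite /hv' mul1g hv mulgV.
  have := stab1_fixS hv'_inj (arc_preserving_translate _ _ hS) hv'1 Ss.
  exact: canRL (mulgKV v).
by rewrite inE => /eqP.
Qed.

Lemma cay_aut_right_regular f : cay_aut S f <-> right_regular f.
Proof.
split=> [fS | [g fE] u v]; last by rewrite !fE cay_arcMr.
pose h u := f u * (f 1)^-1.
have h_inj : injective h by move=> a b /mulIg /perm_inj.
have h1 : h 1 = 1 by rewrite /h mulgV.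
have hS : arc_preserving h by move=> a b; rewrite /h cay_arcMr fS.
exists (f 1) => u.
by have := arc_preserving_fix1_id h_inj hS h1 u; rewrite /h => /(canRL (mulgKV _)).
Qed.

End CayleyDigraph.

Section OrderThreeAndFour.
Variables (gT : finGroupType) (x y : gT).
Hypotheses (ox : #[x] = 3%N) (oy : (4 <= #[y])%N).
Let S := [set x; y].

Lemma neq_order34 : x != y.
Proof. by apply: contraTneq oy => <-; rewrite ox. Qed.

Lemma cay_proper : proper_digraph S.
Proof.
apply: proper_digraph_inv => s; rewrite !inE => /orP[] /eqP ->.
  rewrite negb_or invg_neq ?ox //=.
  by apply: contraTneq oy => <-; rewrite orderV ox.
rewrite negb_or invg_neq ?andbT; last exact: leq_trans oy.
by apply: contraTneq oy => E; rewrite -orderV E ox.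
Qed.

Lemma mulgg_order3 : x * x = x^-1.
Proof. by apply/esym/eqP; rewrite eq_invg_mul -expg2 -expgS -ox expg_order. Qed.

Hypothesis xyy_neq1 : x * y * y != 1.

Lemma no_2path_y_1 w : cay_arc S y w -> cay_arc S w 1 -> False.
Proof.
have y3 : y * y * y != 1 by rewrite -expg2 -expgSr expg_neq1 ?(leq_trans _ oy).
rewrite cay_arc1r /cay_arc !inE => /orP[] /eqP/(canRL (mulgKV y)) -> /orP[] /eqP /(canRL invgK) E.
- by move: E neq_order34; rewrite -mulgg_order3 => /mulgI ->; rewrite eqxx.
- by move: xyy_neq1; rewrite E mulVg eqxx.
- by move: xyy_neq1; rewrite -mulgA E mulgV eqxx.
- by move: y3; rewrite E mulVg eqxx.
Qed.

Lemma arc_preserving_fix1_fixS h :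
  injective h -> arc_preserving S h -> h 1 = 1 -> {in S, forall s, h s = s}.
Proof.
move=> h_inj hS h1.
have hS_mem := arc_preserving_mem hS h1.
have hx : h x = x.
  have : h x \in S by rewrite hS_mem !inE eqxx.
  rewrite !inE => /orP[/eqP // | /eqP hxy]; exfalso.
  apply: (@no_2path_y_1 (h (x * x))).
    by rewrite -hxy hS /cay_arc mulgK !inE eqxx.
  by rewrite -h1 hS cay_arc1r mulgg_order3 invgK !inE eqxx.
have hy : h y = y.
  have : h y \in S by rewrite hS_mem !inE eqxx orbT.
  rewrite !inE => /orP[/eqP hyx | /eqP //].
  by have := neq_order34; rewrite -(inj_eq h_inj) hx hyx eqxx.
by move=> s; rewrite !inE => /orP[] /eqP ->.
Qed.

End OrderThreeAndFour.

Lemma exceptional_Z6 (gT : finGroupType) (x y : gT) :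
  <<[set x; y]>> = [set: gT] -> #[x] = 3%N -> (4 <= #[y])%N -> x * y * y = 1 ->
  [/\ #[y] = 6%N, x = y ^+ 4 & [set: gT] \isog [set: 'Z_6]].
Proof.
move=> genG ox oy /eqP; rewrite -mulgA -eq_invg_mul -expg2 => /eqP xV.
have y6 : y ^+ 6 = 1.
  by rewrite -[6%N]/(2 * 3)%N expgM -xV expgVn -ox expg_order invg1.
have oy6 : #[y] = 6%N.
  have : (#[y] %| 6)%N by rewrite order_dvdn y6.
  by move: oy; case: #[y] => [|[|[|[|[|[|[|n]]]]]]].
have x4 : x = y ^+ 4.
  by apply/eqP; rewrite -[x]invgK xV eq_invg_mul -expgD y6.
have Gy : [set: gT] = <[y]>.
  apply/eqP; rewrite eqEsubset subsetT andbT -genG gen_subG.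
  by apply/subsetP => g; rewrite !inE => /orP[] /eqP ->;
    rewrite ?x4 ?mem_cycle ?cycle_id.
split=> //; have := Zp_isog y.
by rewrite oy6 Gy isog_sym.
Qed.

Theorem lemma2p4 (gT : finGroupType) (x y : gT) :
  <<[set x; y]>> = [set: gT] ->
  #[x] = 3%N -> (4 <= #[y])%N ->
  is_ORR [set x; y] \/
  (#[y] = 6%N /\ x = y ^+ 4 /\ [set: gT] \isog [set: 'Z_6]).
Proof.
move=> genG ox oy.
have [xyy1 | xyy_neq1] := eqVneq (x * y * y) 1.
  by right; case: (exceptional_Z6 genG ox oy xyy1).
left; split=> [|f]; first exact: cay_proper.
apply: cay_aut_right_regular => // h h_inj hS h1.
exact: arc_preserving_fix1_fixS.
Qed.
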